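(* Assume the standing hypotheses (H). If $A\subseteq V(G)$ is a stable set such that $\bigcap_{v\in A}L(v)\neq\varnothing$, then \[\left\lceil\frac{|V(G-A)|+\chi(G-A)-1}{3}\right\rceil=\left\lceil\frac{n+k-1}{3}\right\rceil.\]
   Context: A list assignment $L$ assigns to each vertex $v$ a set $L(v)$ of colors; an $L$-coloring is a proper coloring $f$ with $f(v)\in L(v)$ for all $v$; $\mathrm{ch}$ denotes choice number and $\chi$ chromatic number. A part of a complete multipartite graph is one of its maximal stable sets. Standing hypotheses (H): $k\ge1$ and $n\ge 2k+2$ are integers; $G$ is a complete $k$-partite graph (exactly $k$ nonempty parts) on $n$ vertices; $L$ is a list assignment for $G$ with $|L(v)|\ge\lceil (n+k-1)/3\rceil$ for every vertex $v$; $G$ has no $L$-coloring; $\left|\bigcup_{v\in V(G)}L(v)\right|\le n-1$; and every graph $H$ with fewer than $n$ vertices satisfies $\mathrm{ch}(H)\le\max\{\chi(H),\lceil(|V(H)|+\chi(H)-1)/3\rceil\}$. *)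

From mathcomp Require Import all_boot.
Set Implicit Arguments. Unset Strict Implicit. Unset Printing Implicit Defensive.

Definition simple_graph (T : finType) (e : rel T) : Prop :=
  irreflexive e /\ symmetric e.

Definition proper_on (T : finType) (C : Type) (e : rel T) (S : {set T}) (f : T -> C) : Prop :=
  forall x y, x \in S -> y \in S -> x != y -> e x y -> f x <> f y.

Definition colorableb (T : finType) (e : rel T) (S : {set T}) (c : nat) : bool :=
  [exists f : {ffun T -> 'I_c},
     [forall x in S, forall y in S, ((x != y) && e x y) ==> (f x != f y)]].

Lemma colorable_exists (T : finType) (e : rel T) (S : {set T}) :
  exists c, colorableb e S c.
Proof.
exists #|T|; apply/existsP; exists [ffun x => enum_rank x].
apply/forallP => x; apply/implyP => _; apply/forallP => y; apply/implyP => _.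
apply/implyP => /andP [nxy _]; rewrite !ffunE.
by rewrite (inj_eq enum_rank_inj).
Qed.

Definition chi (T : finType) (e : rel T) (S : {set T}) : nat :=
  ex_minn (colorable_exists e S).

(* list assignments: L : T -> seq nat; |L(v)| = number of distinct colours *)
Definition lsize (s : seq nat) : nat := size (undup s).

Definition L_colorable (T : finType) (e : rel T) (L : T -> seq nat) : Prop :=
  exists f : T -> nat, (forall v, f v \in L v) /\ proper_on e [set: T] f.

Definition choosable (T : finType) (e : rel T) (k : nat) : Prop :=
  forall L : T -> seq nat, (forall v, k <= lsize (L v)) -> L_colorable e L.

(* ch(T,e) <= m, with ch = min { k | k-choosable } *)
Definition ch_le (T : finType) (e : rel T) (m : nat) : Prop :=
  exists2 k, k <= m & choosable e k.

Definition ceil3 (a : nat) : nat := (a + 2) %/ 3.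

(* ceil((a + b - 1)/3); when a + b = 0 this is 0 = ceil(-1/3) *)
Definition bound3 (a b : nat) : nat := ceil3 (a + b).-1.

Definition union_size (T : finType) (L : T -> seq nat) : nat :=
  size (undup (flatten [seq L v | v <- enum T])).

From mathcomp Require Import all_boot.
From mathcomp Require Import zify.
Set Implicit Arguments. Unset Strict Implicit.

(* The upper bound is monotonicity: G - A has at most n
   vertices and chromatic number at most k, and bound3 is monotone in both
   arguments.  For the lower bound we use minimality of the counterexample:
   if A is a nonempty stable set whose lists share a colour c, delete A and
   remove c from every remaining list.  The lists shrink by at most one, so
   if bound3 |G - A| chi(G - A) were smaller than the list size m, the
   smaller graph G - A (whose chromatic number is < m) would be colourable
   from the reduced lists by the choosability hypothesis, and colouring A
   with c would L-colour G, a contradiction.  An empty A is handled by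
   passing to a single vertex, which only decreases G - A. *)

Lemma chi_min (T : finType) (e : rel T) (S : {set T}) (m : nat) :
  colorableb e S m -> chi e S <= m.
Proof. by rewrite /chi; case: ex_minnP => m0 _; apply. Qed.

Lemma chi_colorable (T : finType) (e : rel T) (S : {set T}) :
  colorableb e S (chi e S).
Proof. by rewrite /chi; case: ex_minnP. Qed.

Lemma colorable_sub (T : finType) (e : rel T) (S S' : {set T}) (m : nat) :
  S' \subset S -> colorableb e S m -> colorableb e S' m.
Proof.
move=> sub /existsP [f /forallP Hf]; apply/existsP; exists f.
apply/forallP => x; apply/implyP => xS; apply/forallP => y; apply/implyP => yS.
have := Hf x; rewrite (subsetP sub _ xS) /= => /forallP /(_ y).
by rewrite (subsetP sub _ yS).
Qed.

Lemma chi_mono (T : finType) (e : rel T) (S S' : {set T}) :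
  S' \subset S -> chi e S' <= chi e S.
Proof. by move=> sub; apply/chi_min/(colorable_sub sub)/chi_colorable. Qed.

Lemma chi_multipartite (T : finType) (e : rel T) (k : nat) (p : T -> 'I_k)
  (S : {set T}) :
  (forall x y, e x y = (p x != p y)) -> chi e S <= k.
Proof.
move=> hG; apply: chi_min; apply/existsP; exists [ffun x => p x].
apply/forallP => x; apply/implyP => _; apply/forallP => y; apply/implyP => _.
by apply/implyP => /andP [_]; rewrite hG !ffunE.
Qed.

Lemma chi_induced (T : finType) (e : rel T) (S : {set T}) :
  chi (fun x y : {x : T | x \in S} => e (val x) (val y)) [set: {x : T | x \in S}]
    <= chi e S.
Proof.
apply: chi_min; case/existsP: (chi_colorable e S) => f /forallP Hf.
apply/existsP; exists [ffun x => f (val x)].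
apply/forallP => x; apply/implyP => _; apply/forallP => y; apply/implyP => _.
apply/implyP => /andP [nxy exy]; rewrite !ffunE.
have := Hf (val x); rewrite (valP x) /= => /forallP /(_ (val y)).
by rewrite (valP y) (inj_eq val_inj) nxy exy.
Qed.

Lemma lsize_filter (s : seq nat) (c : nat) :
  (lsize s).-1 <= lsize [seq x <- s | x != c].
Proof.
rewrite /lsize -filter_undup size_filter.
have := count_predC (fun x => x != c) (undup s).
have : count (predC (fun x => x != c)) (undup s) <= 1.
  have -> : count (predC (fun x => x != c)) (undup s) = count_mem c (undup s).
    by apply: eq_count => x /=; rewrite negbK eq_sym.
  by rewrite count_uniq_mem ?undup_uniq //; case: (c \in _).
lia.
Qed.

Lemma lsize_gt0_mem (s : seq nat) : 0 < lsize s -> {c | c \in s}.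
Proof.
rewrite /lsize; case E: (undup s) => [|c t] //= _.
by exists c; rewrite -mem_undup E mem_head.
Qed.

Lemma bound3_mono (a a' b b' : nat) :
  a <= a' -> b <= b' -> bound3 a b <= bound3 a' b'.
Proof. by move=> ha hb; rewrite /bound3 /ceil3; apply: leq_div2r; lia. Qed.

Lemma extend_by_stable_colour (T : finType) (e : rel T) (L : T -> seq nat)
  (A : {set T}) (c : nat) :
  (forall x y, x \in A -> y \in A -> ~~ e x y) ->
  (forall v, v \in A -> c \in L v) ->
  L_colorable (fun x y : {x : T | x \in ~: A} => e (val x) (val y))
              (fun x => [seq d <- L (val x) | d != c]) ->
  L_colorable e L.
Proof.
move=> hA hc [f [fL fP]].
have f_neq_c x : f x != c by have := fL x; rewrite mem_filter => /andP [].
exists (fun v => if insub v is Some x then f x else c); split.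
  move=> v; case: insubP => [x _ <-|].
    by have := fL x; rewrite mem_filter => /andP [].
  by rewrite inE negbK; apply: hc.
move=> x y _ _ nxy exy.
case: insubP => [x' _ ex|xA]; case: insubP => [y' _ ey|yA]; subst.
- by apply: fP => //; rewrite (inj_eq val_inj) in nxy.
- by apply/eqP/f_neq_c.
- by apply/eqP; rewrite eq_sym; apply/f_neq_c.
- by move: xA yA; rewrite !inE !negbK => xA yA; move: (hA _ _ xA yA); rewrite exy.
Qed.

Lemma minimality_bound (T : finType) (e : rel T) (L : T -> seq nat) (m : nat)
  (sg : simple_graph e) (hchi : chi e [set: T] < m)
  (hL : forall v, m <= lsize (L v))
  (hnoc : ~ L_colorable e L)
  (hmin : forall (T' : finType) (e' : rel T'), simple_graph e' -> #|T'| < #|T| ->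
            ch_le e' (maxn (chi e' [set: T']) (bound3 #|T'| (chi e' [set: T']))))
  (A : {set T}) (hA : forall x y, x \in A -> y \in A -> ~~ e x y)
  (c : nat) (hc : forall v, v \in A -> c \in L v) (hAn : A != set0) :
  m <= bound3 #|~: A| (chi e (~: A)).
Proof.
rewrite leqNgt; apply/negP => hlt; apply/hnoc/(extend_by_stable_colour hA hc).
pose T' : finType := {x : T | x \in ~: A}.
pose e' := fun x y : T' => e (val x) (val y).
have sg' : simple_graph e'.
  by case: sg => irr sym; split=> [x|x y]; rewrite /e' ?irr // sym.
have cardT' : #|T'| = #|~: A| by rewrite card_sig; apply: eq_card.
have ltT' : #|T'| < #|T|.
  have := cardsC A; have : 0 < #|A| by rewrite card_gt0.
  by rewrite cardT'; lia.
have chi' : chi e' [set: T'] <= chi e (~: A) := chi_induced e (~: A).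
have chiA : chi e (~: A) <= chi e [set: T] by apply/chi_mono/subsetT.
have [k0 hk0 hch] := hmin T' e' sg' ltT'.
apply: hch => x; apply: (leq_trans hk0); apply: (leq_trans _ (lsize_filter _ _)).
have := hL (val x); have := bound3_mono (leqnn #|T'|) chi'.
by rewrite cardT' geq_max in hk0 *; lia.
Qed.

Theorem proposition10
  (n k : nat) (T : finType) (e : rel T) (p : T -> 'I_k) (L : T -> seq nat)
  (hk : 1 <= k) (hn : 2 * k + 2 <= n) (hT : #|T| = n)
  (hG : forall x y, e x y = (p x != p y))
  (hp : forall i : 'I_k, exists v, p v = i)
  (hL : forall v, ceil3 (n + k).-1 <= lsize (L v))
  (hnoc : ~ L_colorable e L)
  (hunion : union_size L <= n.-1)
  (hmin : forall (T' : finType) (e' : rel T'), simple_graph e' -> #|T'| < n ->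
            ch_le e' (maxn (chi e' [set: T']) (bound3 #|T'| (chi e' [set: T']))))
  (A : {set T})
  (hA : forall x y, x \in A -> y \in A -> ~~ e x y)
  (hAL : exists c, forall v, v \in A -> c \in L v) :
  bound3 #|~: A| (chi e (~: A)) = ceil3 (n + k).-1.
Proof.
have chi_k S : chi e S <= k := chi_multipartite S hG.
apply/eqP; rewrite eqn_leq; apply/andP; split.
  by apply: bound3_mono; [rewrite -hT max_card | exact: chi_k].
have sg : simple_graph e.
  by split=> [x|x y]; rewrite !hG ?eqxx // eq_sym.
have lt_chi : chi e [set: T] < ceil3 (n + k).-1.
  by apply: (leq_ltn_trans (chi_k _)); rewrite /ceil3 leq_divRL //; lia.
have [B [hB [c hc] hBn subB]] : exists B : {set T},
    [/\ forall x y, x \in B -> y \in B -> ~~ e x y,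
        exists c, forall v, v \in B -> c \in L v,
        B != set0 & ~: B \subset ~: A].
  have [An|An] := eqVneq A set0; last by exists A; split.
  have /card_gt0P [v0 _] : 0 < #|T| by lia.
  have [c0 c0L] : {c0 | c0 \in L v0}.
    by apply: lsize_gt0_mem; apply: leq_trans (hL v0); rewrite /ceil3; lia.
  exists [set v0]; split.
  - by move=> x y; rewrite !inE => /eqP -> /eqP ->; rewrite hG eqxx.
  - by exists c0 => v; rewrite inE => /eqP ->.
  - by apply/set0Pn; exists v0; rewrite inE.
  - by rewrite An setC0 subsetT.
rewrite -hT in hmin.
apply: (leq_trans (minimality_bound sg lt_chi hL hnoc hmin hB hc hBn)).
by apply: bound3_mono; [apply: subset_leq_card | apply: chi_mono].
Qed.
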